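(* Let $N\ge 1$, let $a_1,\dots,a_N>0$ and $T_1,\dots,T_N\ge 0$. For $P_{\mathrm{tot}}>0$ let $J^*(P_{\mathrm{tot}};T_1,\dots,T_N)$ denote the minimum of $\sum_{i=1}^N(\log_2(1+a_iP_i)-T_i)^2$ over all $P_1,\dots,P_N\ge 0$ with $\sum_i P_i\le P_{\mathrm{tot}}$, and let $\bar P_i=(2^{T_i}-1)/a_i$. Then $J^*$ is nonincreasing in $P_{\mathrm{tot}}$, equals $0$ at $P_{\mathrm{tot}}=\sum_i\bar P_i$ (when this sum is positive) and for all $P_{\mathrm{tot}}\ge\sum_i\bar P_i$. Moreover, for fixed $P_{\mathrm{tot}}$, $J^*$ is nondecreasing in each target $T_i$ (over $T_i\ge 0$, the other data fixed). *)

From mathcomp Require Import all_boot all_order all_algebra.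
From mathcomp Require Import all_classical all_reals all_analysis.
Set Implicit Arguments. Unset Strict Implicit. Unset Printing Implicit Defensive.
Import Order.TTheory GRing.Theory Num.Theory.
Local Open Scope classical_set_scope.
Local Open Scope ring_scope.

Definition log2 {R : realType} (x : R) : R := ln x / ln 2.

Definition Jobj {R : realType} (N : nat) (a T P : 'I_N -> R) : R :=
  \sum_(i < N) (log2 (1 + a i * P i) - T i) ^+ 2.

Definition feasible {R : realType} (N : nat) (Ptot : R) (P : 'I_N -> R) : Prop :=
  (forall i, 0 <= P i) /\ \sum_(i < N) P i <= Ptot.

Definition Jstar {R : realType} (N : nat) (a T : 'I_N -> R) (Ptot : R) : R :=
  inf [set Jobj a T P | P in @feasible R N Ptot].

Definition Pbar {R : realType} (N : nat) (a T : 'I_N -> R) (i : 'I_N) : R :=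
  (powR 2 (T i) - 1) / a i.

From mathcomp Require Import all_boot all_order all_algebra.
From mathcomp Require Import all_classical all_reals all_analysis.
From mathcomp Require Import lra.
Import Order.TTheory GRing.Theory Num.Theory.
Local Open Scope ring_scope.

(* Enlarging the budget enlarges the feasible set, so the infimum can only
   drop; the allocation Pbar meets every target exactly, so J* vanishes once
   the budget covers it.  For the targets: given P feasible for the target t',
   clip the i-th power at the level that reaches the smaller target t.  The
   clipped allocation is still feasible, and its i-th term is either 0 (the
   clipping was active) or (L - t)^2 <= (L - t')^2 with L <= t <= t'. *)

Section Log2.
Context {R : realType}.

Lemma ln2_gt0 : 0 < ln (2 : R).
Proof. by apply: ln_gt0; lra. Qed.

Lemma log2_powR (t : R) : log2 (powR 2 t) = t.
Proof. by rewrite /log2 ln_powR mulfK // gt_eqF // ln2_gt0. Qed.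

Lemma ler_log2 (x y : R) : 0 < x -> x <= y -> log2 x <= log2 y.
Proof.
move=> x_gt0 le_xy; have y_gt0 : 0 < y by exact: lt_le_trans le_xy.
by rewrite /log2 ler_pM2r ?invr_gt0 ?ln2_gt0 // ler_ln ?posrE.
Qed.

Lemma powR2_ge1 (t : R) : 0 <= t -> 1 <= powR 2 t.
Proof. by move=> t_ge0; rewrite -[leLHS](powRr0 2) ler_powR ?ler1n. Qed.

End Log2.

Section Gain.
Context {R : realType}.
Variable c : R.
Hypothesis c_gt0 : 0 < c.

Definition gain_level (t : R) : R := (powR 2 t - 1) / c.

Lemma gain_level_ge0 (t : R) : 0 <= t -> 0 <= gain_level t.
Proof.
by move=> t_ge0; rewrite divr_ge0 ?(ltW c_gt0) // subr_ge0 powR2_ge1.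
Qed.

Lemma log2_gain_level (t : R) : log2 (1 + c * gain_level t) = t.
Proof. by rewrite /gain_level mulrC divfK ?gt_eqF // addrC subrK log2_powR. Qed.

Lemma sqr_gain_clip_le (x t t' : R) : 0 <= x -> t <= t' ->
  (log2 (1 + c * Num.min x (gain_level t)) - t) ^+ 2
    <= (log2 (1 + c * x) - t') ^+ 2.
Proof.
move=> x_ge0 le_tt'; case: (leP x (gain_level t)) => [x_le|_]; last first.
  by rewrite log2_gain_level subrr expr0n sqr_ge0.
have : log2 (1 + c * x) <= t.
  rewrite -[leRHS]log2_gain_level; apply: ler_log2.
    by rewrite ltr_pwDl ?ltr01 // mulr_ge0 ?(ltW c_gt0).
  by rewrite lerD2l ler_pM2l.
move: (log2 _) => L le_Lt; nra.
Qed.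

End Gain.

Section OptimalValue.
Context {R : realType} {N : nat}.
Variable a : 'I_N -> R.

Lemma Jobj_ge0 (T P : 'I_N -> R) : 0 <= Jobj a T P.
Proof. by apply: sumr_ge0 => i _; rewrite sqr_ge0. Qed.

Lemma feasible0 (Ptot : R) : 0 <= Ptot -> @feasible R N Ptot (fun=> 0).
Proof. by move=> Ptot_ge0; split=> //; rewrite big1. Qed.

Lemma Jstar_ge0 (T : 'I_N -> R) (Ptot : R) : 0 <= Jstar a T Ptot.
Proof.
rewrite /Jstar; set S := (X in inf X).
have [->|/set0P S_neq0] := eqVneq S set0; first by rewrite inf0.
by apply: lb_le_inf => // _ [P _ <-]; exact: Jobj_ge0.
Qed.

Lemma Jstar_le_Jobj (T P : 'I_N -> R) (Ptot : R) :
  feasible Ptot P -> Jstar a T Ptot <= Jobj a T P.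
Proof.
move=> feasP; apply: ge_inf; last by exists P.
by exists 0 => _ [Q _ <-]; exact: Jobj_ge0.
Qed.

Lemma Jstar_le (T1 T2 : 'I_N -> R) (Ptot1 Ptot2 : R) : 0 <= Ptot2 ->
  (forall P, feasible Ptot2 P ->
     exists2 Q, feasible Ptot1 Q & Jobj a T1 Q <= Jobj a T2 P) ->
  Jstar a T1 Ptot1 <= Jstar a T2 Ptot2.
Proof.
move=> Ptot2_ge0 improve; apply: lb_le_inf.
  by exists (Jobj a T2 (fun=> 0)), (fun=> 0); first exact: feasible0.
move=> _ [P /improve [Q feasQ le_QP] <-].
by apply: le_trans le_QP; exact: Jstar_le_Jobj.
Qed.

Lemma Jstar_nonincreasing (T : 'I_N -> R) (P1 P2 : R) :
  0 <= P1 -> P1 <= P2 -> Jstar a T P2 <= Jstar a T P1.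
Proof.
move=> P1_ge0 le_P12; apply: Jstar_le => // P [P_ge0 sumP_le].
by exists P => //; split=> //; exact: le_trans le_P12.
Qed.

Lemma PbarE (T : 'I_N -> R) i : Pbar a T i = gain_level (a i) (T i).
Proof. by []. Qed.

Hypothesis a_gt0 : forall i, 0 < a i.

Lemma Jobj_Pbar (T : 'I_N -> R) : Jobj a T (Pbar a T) = 0.
Proof.
by rewrite /Jobj big1 // => i _; rewrite PbarE log2_gain_level ?subrr ?expr0n.
Qed.

Lemma Jstar_eq0 (T : 'I_N -> R) (Ptot : R) : (forall i, 0 <= T i) ->
  \sum_(i < N) Pbar a T i <= Ptot -> Jstar a T Ptot = 0.
Proof.
move=> T_ge0 sumPbar_le; apply/le_anti; rewrite Jstar_ge0 andbT.
rewrite -(Jobj_Pbar T); apply: Jstar_le_Jobj; split=> // i.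
by rewrite PbarE gain_level_ge0.
Qed.

Lemma Jstar_target_nondecreasing (T : 'I_N -> R) (Ptot : R) (i : 'I_N)
    (t t' : R) : 0 <= Ptot -> 0 <= t -> t <= t' ->
  Jstar a (fun j => if j == i then t else T j) Ptot
    <= Jstar a (fun j => if j == i then t' else T j) Ptot.
Proof.
move=> Ptot_ge0 t_ge0 le_tt'; apply: Jstar_le => // P [P_ge0 sumP_le].
exists (fun j => if j == i then Num.min (P j) (gain_level (a i) t) else P j).
  split=> [j|]; first by case: eqVneq => // ->; rewrite le_min P_ge0 gain_level_ge0.
  apply: le_trans sumP_le; apply: ler_sum => j _.
  by case: eqVneq => // _; rewrite ge_min lexx.
apply: ler_sum => j _; case: eqVneq => [->|//].
exact: sqr_gain_clip_le.
Qed.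

End OptimalValue.

Theorem corollary1 (R : realType) (N : nat) (hN : (1 <= N)%N)
  (a T : 'I_N -> R) (ha : forall i, 0 < a i) (hT : forall i, 0 <= T i) :
  (* J* is nonincreasing in Ptot *)
  (forall P1 P2 : R, 0 < P1 -> P1 <= P2 -> Jstar a T P2 <= Jstar a T P1)
  (* J* vanishes at Ptot = sum_i Pbar_i when this sum is positive *)
  /\ (0 < \sum_(i < N) Pbar a T i -> Jstar a T (\sum_(i < N) Pbar a T i) = 0)
  (* and for all Ptot >= sum_i Pbar_i *)
  /\ (forall Ptot : R, 0 < Ptot -> \sum_(i < N) Pbar a T i <= Ptot ->
        Jstar a T Ptot = 0)
  (* for fixed Ptot, J* is nondecreasing in each target T_i over T_i >= 0 *)
  /\ (forall (Ptot : R) (i : 'I_N) (t t' : R), 0 < Ptot -> 0 <= t -> t <= t' ->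
        Jstar a (fun j => if j == i then t else T j) Ptot
        <= Jstar a (fun j => if j == i then t' else T j) Ptot).
Proof.
split=> [P1 P2 /ltW|]; first exact: Jstar_nonincreasing.
split=> [_|]; first exact: Jstar_eq0.
split=> [Ptot _|Ptot i t t' /ltW]; first exact: Jstar_eq0.
exact: Jstar_target_nondecreasing.
Qed.
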